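(* Let $L\subseteq\Sigma^\omega$ be a prefix-independent language and let $\mathcal{B}$ be a history-deterministic generalised coBüchi automaton recognising $L$. Let $\mathcal{A}_{\min}$ be a nice, safe minimal and safe centralised history-deterministic coBüchi automaton recognising $L$, with safe components having state sets $S_1,\dots,S_k$, and let $n_{\max}=\max_{1\le i\le k}|S_i|$ (this is the number of states of the automaton $\mathcal{A}_{\mathrm{PI}}$, which has states $\{p_1,\dots,p_{n_{\max}}\}$, all transitions, and for each $i$ makes colour $i$ absent exactly on the image of the transitions of the $i$-th safe component under a fixed injection of $S_i$ into its states). Then $n_{\max}\le$ the number of states of $\mathcal{B}$.
   Context: An automaton is a tuple $(Q,\Sigma,q_{\mathrm{init}},\Delta,\Gamma,\mathrm{col},W)$ with finite state set, finite input alphabet $\Sigma$, initial state, transitions $\Delta\subseteq Q\times\Sigma\times Q$, output alphabet $\Gamma$, labelling $\mathrm{col}:\Delta\to\Gamma$, acceptance condition $W\subseteq\Gamma^\omega$. A run on $w=a_1a_2\cdots$ is a sequence $(q_0,a_1,q_1)(q_1,a_2,q_2)\cdots$ of transitions with $q_0=q_{\mathrm{init}}$, accepting if its label sequence is in $W$; $\mathcal{L}(\mathcal{A})$ is the set of words with an accepting run. With a finite colour set $C$ and $\Gamma=2^C$, generalised coBüchi means $W=\{x : \text{some } c\in C \text{ occurs in only finitely many letters of } x\}$; a coBüchi automaton is the case $C=\{1\}$, its coBüchi transitions being those labelled $\{1\}$. A resolver is a map $\sigma:\Sigma^+\to\Delta$ such that for every $w=a_0a_1\cdots$, $\sigma(a_0)\sigma(a_0a_1)\cdots$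 is a run on $w$, accepting whenever $w\in\mathcal{L}(\mathcal{A})$; history-deterministic means a resolver exists. $L$ is prefix-independent if for all $u\in\Sigma^*$, $w\in\Sigma^\omega$: $uw\in L\iff w\in L$. For a coBüchi automaton: $\mathcal{A}_{\mathrm{safe}}$ is obtained by deleting coBüchi transitions; a safe component is a strongly connected component of $\mathcal{A}_{\mathrm{safe}}$; the safe language of $q$ is the set of words with an infinite path from $q$ in $\mathcal{A}_{\mathrm{safe}}$; two states are equivalent if the automaton started from each recognises the same language. Semantically deterministic: $(q,a,p_1),(q,a,p_2)\in\Delta$ implies $p_1,p_2$ equivalent; normal form: transitions between different safe components are coBüchi transitions; safe deterministic: $\mathcal{A}_{\mathrm{safe}}$ deterministic; nice: all states reachable, semantically deterministic, normal form, safe deterministic. Safe centralised: equivalent states with inclusion-comparable safe languages lie in the same safe component; safe minimal: equivalent states with equal safe languages are equal. *)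

From mathcomp Require Import all_boot.
Set Implicit Arguments. Unset Strict Implicit. Unset Printing Implicit Defensive.

Definition word (Sigma : Type) := nat -> Sigma.
Definition language (Sigma : Type) := word Sigma -> Prop.

Definition prefix (Sigma : Type) (w : word Sigma) (n : nat) : seq Sigma := mkseq w n.

Definition prepend (Sigma : Type) (u : seq Sigma) (w : word Sigma) : word Sigma :=
  fun i => if i < size u then nth (w 0) u i else w (i - size u).

Definition prefix_independent (Sigma : Type) (L : language Sigma) : Prop :=
  forall (u : seq Sigma) (w : word Sigma), L (prepend u w) <-> L w.

Record gcb_aut (Sigma : finType) := GCB {
  gstate : finType;
  gcolour : finType;
  ginit : gstate;
  gdelta : gstate -> Sigma -> gstate -> bool;
  gcol : gstate -> Sigma -> gstate -> {set gcolour}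
}.

Section GCB.
Variables (Sigma : finType) (A : gcb_aut Sigma).

Definition g_run_from (q : gstate A) (w : word Sigma) (r : nat -> gstate A) : Prop :=
  r 0 = q /\ forall n, gdelta (r n) (w n) (r n.+1).

Definition g_accepting (w : word Sigma) (r : nat -> gstate A) : Prop :=
  exists c : gcolour A, exists N, forall n, N <= n -> c \notin gcol (r n) (w n) (r n.+1).

Definition g_accepts_from (q : gstate A) (w : word Sigma) : Prop :=
  exists r, g_run_from q w r /\ g_accepting w r.

Definition g_lang : language Sigma := g_accepts_from (ginit A).

Definition g_recognises (L : language Sigma) : Prop := forall w, g_lang w <-> L w.

(* A resolver sigma : Sigma^+ -> Delta (value on the empty word irrelevant);
   transitions are triples ((q, a), p). *)
Definition g_resolver (sigma : seq Sigma -> (gstate A * Sigma) * gstate A) : Prop :=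
  forall w : word Sigma,
    let t := fun n => sigma (prefix w n.+1) in
    (t 0).1.1 = ginit A /\
    (forall n, (t n).1.2 = w n /\ gdelta (t n).1.1 (t n).1.2 (t n).2
               /\ (t n).2 = (t n.+1).1.1) /\
    (g_lang w -> exists c : gcolour A, exists N, forall n, N <= n ->
        c \notin gcol (t n).1.1 (t n).1.2 (t n).2).

Definition g_history_deterministic : Prop := exists sigma, g_resolver sigma.
End GCB.

Record cb_aut (Sigma : finType) := CB {
  cstate : finType;
  cinit : cstate;
  cdelta : cstate -> Sigma -> cstate -> bool;
  cb : cstate -> Sigma -> cstate -> bool   (* label {1} iff cb, label {} otherwise *)
}.

Definition cb_to_gcb (Sigma : finType) (A : cb_aut Sigma) : gcb_aut Sigma :=
  @GCB Sigma (cstate A) unit (cinit A) (@cdelta Sigma A)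
       (fun q a p => if cb q a p then [set: unit] else set0).

Section CB.
Variables (Sigma : finType) (A : cb_aut Sigma).
Local Notation Q := (cstate A).
Local Notation G := (cb_to_gcb A).

Definition c_recognises (L : language Sigma) := g_recognises G L.
Definition c_history_deterministic := g_history_deterministic G.

Definition c_lang_from (q : Q) : language Sigma := @g_accepts_from Sigma G q.

Definition c_equiv (p q : Q) : Prop := forall w, c_lang_from p w <-> c_lang_from q w.

Definition safe_edge (p q : Q) : bool := [exists a, cdelta p a q && ~~ cb p a q].

Definition same_safe_comp (p q : Q) : bool :=
  connect safe_edge p q && connect safe_edge q p.

Definition safe_comp (q : Q) : {set Q} := [set p | same_safe_comp q p].

Definition safe_lang (q : Q) : language Sigma :=
  fun w => exists r : nat -> Q, r 0 = q /\
    forall n, cdelta (r n) (w n) (r n.+1) && ~~ cb (r n) (w n) (r n.+1).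

Definition all_reachable : Prop :=
  forall q : Q, connect (fun p p' : Q => [exists a, cdelta p a p']) (cinit A) q.

Definition semantically_deterministic : Prop :=
  forall (q : Q) (a : Sigma) (p1 p2 : Q), cdelta q a p1 -> cdelta q a p2 -> c_equiv p1 p2.

Definition normal_form : Prop :=
  forall (p : Q) (a : Sigma) (q : Q), cdelta p a q -> ~~ same_safe_comp p q -> cb p a q.

Definition safe_deterministic : Prop :=
  forall (p : Q) (a : Sigma) (q1 q2 : Q), cdelta p a q1 -> ~~ cb p a q1 -> cdelta p a q2 -> ~~ cb p a q2 ->
    q1 = q2.

Definition nice : Prop :=
  all_reachable /\ semantically_deterministic /\ normal_form /\ safe_deterministic.

Definition lang_incl (L1 L2 : language Sigma) : Prop := forall w, L1 w -> L2 w.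

Definition safe_centralised : Prop :=
  forall p q : Q, c_equiv p q ->
    (lang_incl (safe_lang p) (safe_lang q) \/ lang_incl (safe_lang q) (safe_lang p)) ->
    same_safe_comp p q.

Definition safe_minimal : Prop :=
  forall p q : Q, c_equiv p q ->
    (forall w, safe_lang p w <-> safe_lang q w) -> p = q.

Definition n_max : nat := \max_(q : Q) #|safe_comp q|.
End CB.

From Pilot Require Import Defs.
From mathcomp Require Import all_boot boolp zify.
Set Implicit Arguments. Unset Strict Implicit. Unset Printing Implicit Defensive.

(* Fix resolvers sigma of B and tau of A, and a safe component S of A with at least two
   states.  By prefix independence all states of A recognise L, so safe minimality and
   safe centralisation order the states of A by inclusion of their sets of safely readable
   finite words: comparable states lie in the same component, equal ones coincide.
   Call (h, q), with q in S, c-avoiding if sigma, after reading h, never sees colour c while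
   reading a safe word of q.  Some c-avoiding pair exists: otherwise one builds a safe word
   from S, hence in L, along which sigma sees every colour infinitely often.  The
   transitions sigma takes from c-avoiding pairs form a graph on the states of B whose
   infinite paths avoid c.  For some c-avoiding (h, q) and some p, the graph words from
   sigma(h) are all safe words of p: otherwise one builds a word accepted along the graph,
   hence in L, on which tau leaves safe transitions infinitely often.  Moving q along a safe
   path to p strictly enlarges its safe words until q = p; then the safe words of p are
   exactly the graph words from sigma(h).  Such exact pairs propagate along safe transitions
   and p is determined by sigma(h), which injects S into the states of B. *)

Local Notation pfx := Defs.prefix.

Section Words.
Variable T : Type.
Implicit Types (w : word T) (u v : seq T).

Definition segment w n m : seq T := map w (iota n m).

Lemma pfxS w n : pfx w n.+1 = rcons (pfx w n) (w n).
Proof. exact: mkseqS. Qed.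

Lemma pfxD w n m : pfx w (n + m) = pfx w n ++ segment w n m.
Proof. by rewrite /Defs.prefix /mkseq iotaD map_cat. Qed.

Lemma segmentS w n m : segment w n m.+1 = rcons (segment w n m) (w (n + m)).
Proof. by rewrite /segment -addn1 iotaD map_cat cats1. Qed.

Lemma segment_pfx w n v : pfx w (n + size v) = pfx w n ++ v -> segment w n (size v) = v.
Proof.
by rewrite pfxD => /(congr1 (drop n)); rewrite !drop_size_cat ?size_mkseq.
Qed.

Lemma pfx_split w m u a v : pfx w m = u ++ a :: v -> pfx w (size u) = u /\ w (size u) = a.
Proof.
move=> E; have um : size u < m.
  by rewrite -(size_mkseq w m) -/(pfx w m) E size_cat /= addnS ltnS leq_addr.
split.
  have := take_size_cat (a :: v) (erefl (size u)); rewrite -E => {2}<-.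
  by rewrite /Defs.prefix /mkseq -map_take take_iota (minn_idPl (ltnW um)).
by rewrite -(nth_mkseq (w 0) w um) -/(pfx w m) E nth_cat ltnn subnn.
Qed.

Lemma prepend_nil w : prepend [::] w = w.
Proof. by apply: funext => i; rewrite /prepend subn0. Qed.

Lemma prepend1S a w n : prepend [:: a] w n.+1 = w n.
Proof. by rewrite /prepend /= subn1. Qed.

Lemma prepend_cat u v w : prepend (u ++ v) w = prepend u (prepend v w).
Proof.
apply: funext => i; rewrite /prepend size_cat nth_cat.
case: (ltnP i (size u)) => [iu | /subnKC <-].
  by rewrite ltn_addr //; apply: set_nth_default.
by move: (i - size u) => k; rewrite ltn_add2l addKn subnDA addKn.
Qed.

Section Extension.
Variable hs : nat -> seq T.
Hypothesis hs_ext : forall k, exists2 e, hs k.+1 = hs k ++ e & 0 < size e.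

Lemma extension_prefix k m : k <= m -> exists e, hs m = hs k ++ e.
Proof.
move=> /subnKC <-; elim: (m - k) => [|j [e IH]]; first by exists [::]; rewrite addn0 cats0.
by have [e' E _] := hs_ext (k + j); exists (e ++ e'); rewrite addnS E IH catA.
Qed.

Lemma extension_size k : k <= size (hs k).
Proof.
elim: k => // k IH; have [e -> e0] := hs_ext k.
by rewrite size_cat -addn1 leq_add.
Qed.

Lemma extension_limit : exists w : word T, forall k, pfx w (size (hs k)) = hs k.
Proof.
case E1: (hs 1) => [|d l]; first by have := extension_size 1; rewrite E1.
exists (fun n => nth d (hs n.+1) n) => k; apply: (@eq_from_nth _ d); first exact: size_mkseq.
move=> i; rewrite size_mkseq => ik; rewrite nth_mkseq //.
have [ki | /ltnW ik1] := leqP k i.+1.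
  by have [e ->] := extension_prefix ki; rewrite nth_cat ik.
by have [e ->] := extension_prefix ik1; rewrite nth_cat (extension_size i.+1).
Qed.
End Extension.
End Words.

Lemma pfx_map (T U : Type) (f : T -> U) (w : word T) m : pfx (f \o w) m = map f (pfx w m).
Proof. by rewrite /Defs.prefix /mkseq map_comp. Qed.

Lemma dependent_choice (X : Type) (P : X -> Prop) (R : X -> X -> Prop) (x0 : X) :
  P x0 -> (forall x, P x -> exists2 y, P y & R x y) ->
  exists f : nat -> X, forall k, P (f k) /\ R (f k) (f k.+1).
Proof.
move=> Px0 PR.
have next x : exists y, P x -> P y /\ R x y.
  case: (pselect (P x)) => [/PR [y Py Rxy] | nPx]; first by exists y.
  by exists x => /nPx.
have [g Hg] := choice next.
have Pf k : P (iter k g x0) by elim: k => //= k /Hg [].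
by exists (fun k => iter k g x0) => k; split; last exact: (Hg _ (Pf k)).2.
Qed.

Section LabelledPaths.
Variables (X T : Type) (e : X -> T -> X -> Prop).

Fixpoint lpath (x : X) (l : seq (T * X)) : Prop :=
  if l is (a, y) :: l' then e x a y /\ lpath y l' else True.

Lemma lpath_cat x l1 l2 :
  lpath x (l1 ++ l2) <-> lpath x l1 /\ lpath (last x (map snd l1)) l2.
Proof. by elim: l1 x => [|[a y] l1 IH] x /=; [tauto | rewrite IH; tauto]. Qed.

Lemma lpath_rcons x l p :
  lpath x (rcons l p) <-> lpath x l /\ e (last x (map snd l)) p.1 p.2.
Proof. by case: p => a y; rewrite -cats1 lpath_cat /=; tauto. Qed.

Definition lrun (x : X) (lw : word (T * X)) (n : nat) : X :=
  if n is n'.+1 then (lw n').2 else x.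

Lemma last_lrun x lw n : last x (map snd (pfx lw n)) = lrun x lw n.
Proof. by case: n => // n; rewrite pfxS map_rcons last_rcons. Qed.

Lemma lpath_limit x lw : (forall n, exists2 m, n < m & lpath x (pfx lw m)) ->
  forall n, e (lrun x lw n) (lw n).1 (lrun x lw n.+1).
Proof.
move=> long n; have [m /subnKC <-] := long n.
by rewrite pfxD pfxS => /lpath_cat [/lpath_rcons [_]]; rewrite last_lrun.
Qed.
End LabelledPaths.

Section Runs.
Variables (Sigma : finType) (G : gcb_aut Sigma).

Lemma accepts_from_cons (s : gstate G) a s' w :
  gdelta s a s' -> g_accepts_from s' w -> g_accepts_from s (prepend [:: a] w).
Proof.
move=> ss' [r [[r0 rw] [c [N cN]]]].
exists (fun n => if n is n'.+1 then r n' else s); split.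
  by split=> // -[|n]; rewrite ?prepend1S ?r0 //; apply: rw.
by exists c, N.+1 => -[|n] // Nn; rewrite prepend1S; apply: cN.
Qed.

Lemma accepts_from_uncons (s : gstate G) a w :
  g_accepts_from s (prepend [:: a] w) -> exists2 s', gdelta s a s' & g_accepts_from s' w.
Proof.
move=> [r [[r0 rw] [c [N cN]]]]; exists (r 1); first by have := rw 0; rewrite r0.
exists (fun n => r n.+1); split; first by split=> // n; have := rw n.+1; rewrite prepend1S.
by exists c, N => n Nn; have := cN n.+1 (leqW Nn); rewrite prepend1S.
Qed.
End Runs.

Section Resolver.
Variables (Sigma : finType) (G : gcb_aut Sigma)
  (sigma : seq Sigma -> (gstate G * Sigma) * gstate G).
Hypothesis sigma_res : g_resolver sigma.

Definition res_state (u : seq Sigma) : gstate G :=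
  if u is [::] then ginit G else (sigma u).2.

Lemma resolver_source w n : (sigma (pfx w n.+1)).1 = (res_state (pfx w n), w n).
Proof.
have [init [step _]] := sigma_res w.
apply: injective_projections; last exact: (step n).1.
by case: n => [|n] //=; rewrite (step n).2.2.
Qed.

Lemma resolver_trans w n : gdelta (res_state (pfx w n)) (w n) (res_state (pfx w n.+1)).
Proof.
have [_ [step _]] := sigma_res w; have [_ [+ _]] := step n.
by rewrite resolver_source.
Qed.

Lemma resolver_accepting w : g_lang G w -> exists c N, forall n, N <= n ->
  c \notin gcol (res_state (pfx w n)) (w n) (res_state (pfx w n.+1)).
Proof.
move=> Gw; have [_ [_ /(_ Gw) [c [N cN]]]] := sigma_res w.
by exists c, N => n /cN; rewrite resolver_source.
Qed.

Lemma resolver_step u a : gdelta (res_state u) a (res_state (rcons u a)).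
Proof.
pose w n := nth a (rcons u a) n.
have := mkseq_nth a (rcons u a); rewrite size_rcons -/(pfx w _) => pfx_w.
by move: (pfx_w) (resolver_trans w (size u)); rewrite pfxS => /rcons_inj [-> ->].
Qed.

Lemma res_state_accepts h w :
  g_accepts_from (res_state h) w -> g_lang G (prepend h w).
Proof.
elim/last_ind: h w => [|h a IH] w hw; first by rewrite prepend_nil.
by rewrite -cats1 prepend_cat; apply/IH/(accepts_from_cons (resolver_step h a)).
Qed.
End Resolver.

Section SafeReading.
Variables (Sigma : finType) (A : cb_aut Sigma).
Local Notation Q := (cstate A).
Implicit Types (p q r : Q) (u v : seq Sigma).

Definition safe_trans q a q' := cdelta q a q' && ~~ cb q a q'.

Definition safe_step q a : option Q := [pick q' | safe_trans q a q'].

Definition safe_read q u : option Q :=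
  foldl (fun o a => obind (safe_step^~ a) o) (Some q) u.

Definition readable q u : bool := safe_read q u != None.

Definition sub_readable p q : Prop := forall y, readable p y -> readable q y.

Lemma safe_step_trans q a q' : safe_step q a = Some q' -> safe_trans q a q'.
Proof. by rewrite /safe_step; case: pickP => // ? + [<-]. Qed.

Lemma safe_read_cat q u v :
  safe_read q (u ++ v) = obind (safe_read^~ v) (safe_read q u).
Proof. by rewrite /safe_read foldl_cat; case: (foldl _ (Some q) u) => //=; elim: v. Qed.

Lemma safe_read_cons q a u :
  safe_read q (a :: u) = obind (safe_read^~ u) (safe_step q a).
Proof. exact: (safe_read_cat q [:: a]). Qed.

Lemma safe_read_rcons q u a :
  safe_read q (rcons u a) = obind (safe_step^~ a) (safe_read q u).
Proof. by rewrite -cats1 safe_read_cat; case: safe_read. Qed.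

Lemma readable_catl q u v : readable q (u ++ v) -> readable q u.
Proof. by rewrite /readable safe_read_cat; case: safe_read. Qed.

Lemma readable_catr q u v q' :
  safe_read q u = Some q' -> readable q (u ++ v) = readable q' v.
Proof. by rewrite /readable safe_read_cat => ->. Qed.

Lemma same_safe_comp_sym p q : same_safe_comp p q -> same_safe_comp q p.
Proof. by case/andP=> pq qp; apply/andP. Qed.

Lemma same_safe_comp_trans p q r :
  same_safe_comp p q -> same_safe_comp q r -> same_safe_comp p r.
Proof.
case/andP=> pq qp /andP [qr rq].
by apply/andP; split; [apply: connect_trans pq qr | apply: connect_trans rq qp].
Qed.

Lemma same_safe_comp_refl q : same_safe_comp q q.
Proof. by rewrite /same_safe_comp connect0. Qed.

Lemma safe_comp_live s q :
  1 < #|safe_comp s| -> q \in safe_comp s -> exists a q', safe_trans q a q'.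
Proof.
move=> /card_gt1P [x [y [xS yS xy]]] qS.
have [t tS tq] : exists2 t, t \in safe_comp s & t != q.
  by case: (eqVneq x q) => [xq | ]; [exists y; rewrite // -xq eq_sym | exists x].
have : same_safe_comp q t.
  by move: qS tS; rewrite !inE => qS; apply: same_safe_comp_trans (same_safe_comp_sym qS).
case/andP=> /connectP [[|q1 p] /= qp tE] _; first by rewrite tE eqxx in tq.
by case/andP: qp => /existsP [a qa] _; exists a, q1.
Qed.

Lemma safe_lang_accepts q w : safe_lang q w -> c_lang_from q w.
Proof.
move=> [r [r0 rs]]; exists r; split; first by split=> // n; case/andP: (rs n).
by exists tt, 0 => n _ /=; case/andP: (rs n) => _ /negbTE ->; rewrite inE.
Qed.

Section SafeDeterministic.
Hypothesis A_sdet : safe_deterministic A.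

Lemma safe_stepE q a q' : safe_trans q a q' -> safe_step q a = Some q'.
Proof.
move=> qq'; rewrite /safe_step.
case: pickP => [q'' /andP [d'' s''] | /(_ q')]; last by rewrite qq'.
by case/andP: qq' => d s; rewrite (A_sdet d s d'' s'').
Qed.

Lemma connect_safe_read p q :
  connect (@safe_edge _ A) p q -> exists u, safe_read p u = Some q.
Proof.
case/connectP=> s; elim: s p => [|q1 s IH] p /=; first by move=> _ ->; exists [::].
case/andP=> /existsP [a /safe_stepE pq1] /IH /[apply] [[u uq]].
by exists (a :: u); rewrite safe_read_cons pq1.
Qed.

Lemma safe_langP q w : safe_lang q w <-> forall n, readable q (pfx w n).
Proof.
split=> [[r [r0 rs]] n | rd].
  suff E : safe_read q (pfx w n) = Some (r n) by rewrite /readable E.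
  elim: n => [|n IH]; first by rewrite r0.
  by rewrite pfxS safe_read_rcons IH /= (safe_stepE (rs n)).
exists (fun n => odflt q (safe_read q (pfx w n))); split=> // n.
have := rd n.+1; rewrite /readable pfxS safe_read_rcons.
case: (safe_read q (pfx w n)) => //= s.
by case E: (safe_step s (w n)) => [s'|] //= _; apply: safe_step_trans.
Qed.
End SafeDeterministic.

Section NormalForm.
Hypothesis A_nf : normal_form A.

Lemma safe_trans_comp q a q' : safe_trans q a q' -> same_safe_comp q q'.
Proof. by case/andP=> d s; apply: contraNT s; apply: A_nf. Qed.

Lemma safe_read_comp q u q' : safe_read q u = Some q' -> same_safe_comp q q'.
Proof.
elim: u q => [|a u IH] q; first by move=> [<-]; apply: same_safe_comp_refl.
rewrite safe_read_cons; case E: (safe_step q a) => [s|] //= /IH.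
exact: same_safe_comp_trans (safe_trans_comp (safe_step_trans E)).
Qed.

Lemma safe_read_mem s q u q' :
  q \in safe_comp s -> safe_read q u = Some q' -> q' \in safe_comp s.
Proof. by rewrite !inE => sq /safe_read_comp; apply: same_safe_comp_trans. Qed.
End NormalForm.
End SafeReading.

Section PrefixIndependentNice.
Variables (Sigma : finType) (L : language Sigma) (A : cb_aut Sigma).
Hypotheses (L_pi : prefix_independent L) (A_nice : nice A) (A_L : c_recognises A L).

Lemma c_lang_fromE (q : cstate A) w : c_lang_from q w <-> L w.
Proof.
have [reach [sdet _]] := A_nice.
have step (s : cstate A) a (s' : cstate A) : cdelta s a s' ->
    (forall w, c_lang_from s w <-> L w) -> forall w, c_lang_from s' w <-> L w.
  move=> ss' sL v; split=> [/(@accepts_from_cons _ (cb_to_gcb A) _ _ _ _ ss') /sL | Lv].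
    by rewrite L_pi.
  have /sL /accepts_from_uncons [s'' ss'' s''v] : L (prepend [:: a] v) by rewrite L_pi.
  exact/(sdet _ _ _ _ ss' ss'').
have initL w' : c_lang_from (cinit A) w' <-> L w' := A_L w'.
case/connectP: (reach q) => p + ->; elim: p (cinit A) initL => [|s p IH] s0 s0L //=.
by case/andP=> /existsP [a s0s]; apply/IH/(step _ _ _ s0s s0L).
Qed.

Lemma c_equiv_all (p q : cstate A) : c_equiv p q.
Proof. by move=> w; rewrite !c_lang_fromE. Qed.
End PrefixIndependentNice.

Section ReadableOrder.
Variables (Sigma : finType) (A : cb_aut Sigma).
Hypotheses (A_equiv : forall p q : cstate A, c_equiv p q) (A_sdet : safe_deterministic A)
  (A_min : safe_minimal A) (A_cen : safe_centralised A).

Lemma sub_readable_comp (p q : cstate A) : sub_readable p q -> same_safe_comp p q.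
Proof.
move=> pq; apply: A_cen (A_equiv p q) _; left=> w /(safe_langP A_sdet) pw.
by apply/(safe_langP A_sdet) => n; apply/pq/pw.
Qed.

Lemma sub_readable_antisym (p q : cstate A) : sub_readable p q -> sub_readable q p -> p = q.
Proof.
move=> pq qp; apply: A_min (A_equiv p q) _ => w.
by rewrite !(safe_langP A_sdet); split=> rd n; [apply/pq | apply/qp].
Qed.

Definition readable_rank (q : cstate A) := #|[set p | `[< sub_readable p q >]]|.

Lemma readable_rank_le (q : cstate A) : readable_rank q <= #|cstate A|.
Proof. exact: max_card. Qed.

Lemma readable_rank_lt (p q : cstate A) :
  sub_readable p q -> p != q -> readable_rank p < readable_rank q.
Proof.
move=> pq npq; apply: proper_card; apply/properP; split.
  by apply/subsetP=> r; rewrite !inE => /asboolP rp; apply/asboolP => y /rp /pq.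
exists q; rewrite !inE; first by apply/asboolP.
by apply/asboolP => qp; case/eqP: npq; apply: sub_readable_antisym.
Qed.
End ReadableOrder.

Section ResolverEventuallySafe.
Variables (Sigma : finType) (A : cb_aut Sigma)
  (tau : seq Sigma -> (cstate A * Sigma) * cstate A).
Hypotheses (A_sdet : safe_deterministic A) (tau_res : g_resolver (A := cb_to_gcb A) tau).
Local Notation alpha := (@res_state _ (cb_to_gcb A) tau).

Lemma resolver_eventually_safe w : c_lang_from (cinit A) w -> exists N, forall n m, N <= n ->
  safe_read (alpha (pfx w n)) (segment w n m) = Some (alpha (pfx w (n + m))).
Proof.
move=> /(resolver_accepting tau_res) [[] [N cN]]; exists N => n m Nn.
elim: m => [|m IH]; first by rewrite addn0.
rewrite segmentS safe_read_rcons IH /= addnS; apply: safe_stepE => //; apply/andP; split.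
  exact: (resolver_trans tau_res).
by have := cN _ (leq_trans Nn (leq_addr m n)); rewrite /=; case: cb; rewrite ?inE.
Qed.
End ResolverEventuallySafe.

Section Bound.
Variables (Sigma : finType) (L : language Sigma) (B : gcb_aut Sigma) (A : cb_aut Sigma).
Hypotheses (L_pi : prefix_independent L) (B_L : g_recognises B L) (A_nice : nice A)
  (A_min : safe_minimal A) (A_cen : safe_centralised A) (A_L : c_recognises A L).
Variables (sigma : seq Sigma -> (gstate B * Sigma) * gstate B)
  (tau : seq Sigma -> (cstate A * Sigma) * cstate A).
Hypotheses (sigma_res : g_resolver sigma) (tau_res : g_resolver (A := cb_to_gcb A) tau).
Variable s0 : cstate A.

Local Notation Q := (cstate A).
Local Notation S := (safe_comp s0).
Local Notation beta := (res_state sigma).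
Local Notation alpha := (@res_state _ (cb_to_gcb A) tau).

Let A_sdet : safe_deterministic A. Proof. by case: A_nice => _ [_ [_]]. Qed.
Let A_nf : normal_form A. Proof. by case: A_nice => _ [_ []]. Qed.
Let A_equiv : forall p q : Q, c_equiv p q. Proof. exact: c_equiv_all L_pi A_nice A_L. Qed.

Definition hits (c : gcolour B) (h y : seq Sigma) := exists y1 a y2, y = y1 ++ a :: y2 /\
  c \in gcol (beta (h ++ y1)) a (beta (h ++ rcons y1 a)).

Lemma hits_size c h y : hits c h y -> 0 < size y.
Proof. by case=> y1 [a [y2 [-> _]]]; rewrite size_cat addnS. Qed.

Lemma hits_catr c h y z : hits c h y -> hits c h (y ++ z).
Proof. by case=> y1 [a [y2 [-> hc]]]; exists y1, a, (y2 ++ z); rewrite -catA. Qed.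

Lemma hits_catl c h x y : hits c (h ++ x) y -> hits c h (x ++ y).
Proof.
case=> y1 [a [y2 [-> hc]]]; exists (x ++ y1), a, y2.
by rewrite rcons_cat !catA.
Qed.

Lemma hits_segment c w n m : hits c (pfx w n) (segment w n m) ->
  exists2 i, n <= i & c \in gcol (beta (pfx w i)) (w i) (beta (pfx w i.+1)).
Proof.
case=> y1 [a [y2 [E hc]]].
have [P1 wa] : pfx w (size (pfx w n ++ y1)) = pfx w n ++ y1 /\ w (size (pfx w n ++ y1)) = a.
  by apply: (@pfx_split _ w (n + m) _ _ y2); rewrite pfxD E catA.
exists (size (pfx w n ++ y1)); first by rewrite size_cat size_mkseq leq_addr.
by rewrite pfxS P1 wa rcons_cat.
Qed.

Section Colour.
Variable c : gcolour B.

Definition avoiding (h : seq Sigma) (q : Q) := q \in S /\ forall y, readable q y -> ~ hits c h y.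

Lemma avoiding_read h q u q' : avoiding h q -> safe_read q u = Some q' -> avoiding (h ++ u) q'.
Proof.
move=> [qS qh] qu; split; first exact: (safe_read_mem A_nf qS qu).
by move=> y; rewrite -(readable_catr _ qu) => /qh + /hits_catl.
Qed.

Definition avoid_edge (b : gstate B) (a : Sigma) (b' : gstate B) := exists h q,
  [/\ avoiding h q, beta h = b, readable q [:: a] & beta (rcons h a) = b'].

Definition avoid_reached (b : gstate B) := exists h q, avoiding h q /\ beta h = b.

Lemma avoiding_step h q a q' : avoiding h q -> safe_step q a = Some q' ->
  avoiding (rcons h a) q' /\ avoid_edge (beta h) a (beta (rcons h a)).
Proof.
move=> hq qa; have qa' : safe_read q [:: a] = Some q' by rewrite safe_read_cons qa.
split; first by rewrite -cats1; apply: avoiding_read hq qa'.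
by exists h, q; split; rewrite // /readable qa'.
Qed.

Lemma avoid_edge_step b a b' :
  avoid_edge b a b' -> [/\ gdelta b a b', c \notin gcol b a b' & avoid_reached b'].
Proof.
case=> h [q [hq <- qa <-]]; split; first exact: resolver_step.
  by apply/negP => hc; apply: (hq.2 _ qa); exists [::], a, [::]; rewrite /= cats0 cats1.
move: qa; rewrite /readable safe_read_cons; case E: (safe_step q a) => [q'|] //= _.
by exists (rcons h a), q'; split => //; have [] := avoiding_step hq E.
Qed.

Lemma lpath_avoid_reached b l :
  lpath avoid_edge b l -> avoid_reached b -> avoid_reached (last b (map snd l)).
Proof.
elim: l b => [|[a b'] l IH] b //= [bb' /IH b'l] _.
by apply: b'l; have [] := avoid_edge_step bb'.
Qed.

Definition avoid_word (b : gstate B) (y : seq Sigma) :=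
  exists2 l, lpath avoid_edge b l & map fst l = y.

Lemma avoid_word_cons b a b' y : avoid_edge b a b' -> avoid_word b' y -> avoid_word b (a :: y).
Proof. by move=> bb' [l bl <-]; exists ((a, b') :: l). Qed.

Lemma avoiding_avoid_word h q y : avoiding h q -> readable q y -> avoid_word (beta h) y.
Proof.
elim: y h q => [|a y IH] h q hq; first by exists [::].
rewrite /readable safe_read_cons; case E: (safe_step q a) => [q'|] //= qy.
have [hq' ha] := avoiding_step hq E.
exact: avoid_word_cons ha (IH _ _ hq' qy).
Qed.

Lemma avoid_word_read h q u q' y : avoiding h q -> safe_read q u = Some q' ->
  avoid_word (beta (h ++ u)) y -> avoid_word (beta h) (u ++ y).
Proof.
elim: u h q => [|a u IH] h q hq; first by rewrite cats0.
rewrite safe_read_cons; case E: (safe_step q a) => [s|] //= su.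
have [hs ha] := avoiding_step hq E.
by rewrite -cat_rcons => /(IH _ _ hs su); apply: avoid_word_cons ha.
Qed.

Definition dominated (h : seq Sigma) (p : Q) := forall y, avoid_word (beta h) y -> readable p y.

Definition exact (h : seq Sigma) (p : Q) := avoiding h p /\ dominated h p.

Lemma exact_read h p u t : exact h p -> safe_read p u = Some t -> exact (h ++ u) t.
Proof.
move=> [hp dom] pu; split; first exact: avoiding_read hp pu.
by move=> y /(avoid_word_read hp pu) /dom; rewrite (readable_catr _ pu).
Qed.

Lemma exact_inj h h' p p' : exact h p -> exact h' p' -> beta h = beta h' -> p = p'.
Proof.
move=> [hp dom] [hp' dom'] E; apply: (sub_readable_antisym A_equiv A_sdet A_min).
  by move=> y /(avoiding_avoid_word hp); rewrite E => /dom'.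
by move=> y /(avoiding_avoid_word hp'); rewrite -E => /dom.
Qed.

Lemma exact_card h p : exact h p -> #|S| <= #|gstate B|.
Proof.
move=> hp; have pS : p \in S by case: hp => [[]].
have exS t : exists h', t \in S -> exact h' t.
  case: (boolP (t \in S)) => [tS | _]; last by exists [::].
  have /andP [/(connect_safe_read A_sdet) [u pu] _] : same_safe_comp p t.
    by move: pS tS; rewrite !inE => /same_safe_comp_sym; apply: same_safe_comp_trans.
  by exists (h ++ u) => _; apply: exact_read hp pu.
have [f hf] := choice exS.
apply: (leq_card_in (beta \o f)) => t t' tS t'S /= E.
exact: exact_inj (hf _ tS) (hf _ t'S) E.
Qed.

Lemma exact_exists h q p : avoiding h q -> dominated h p -> exists h' q', exact h' q'.
Proof.
move=> hq dom; have [k] := ubnP (#|Q| - readable_rank q).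
elim: k h q p hq dom => // k IH h q p hq dom rk.
have [eqp|qp] := eqVneq q p; first by exists h, q; split; rewrite // eqp.
have sub : sub_readable q p by move=> y /(avoiding_avoid_word hq) /dom.
have /andP [/(connect_safe_read A_sdet) [u qu] _] := sub_readable_comp A_equiv A_sdet A_cen sub.
have := sub u; rewrite /readable qu => /(_ isT).
case pu: (safe_read p u) => [p'|] // _.
apply: (IH (h ++ u) p p' (avoiding_read hq qu)).
  by move=> y /(avoid_word_read hq qu) /dom; rewrite (readable_catr _ pu).
have := readable_rank_lt A_equiv A_sdet A_min sub qp.
have := readable_rank_le p; lia.
Qed.

Lemma dominated_exists h0 q0 : avoiding h0 q0 -> exists h q p, avoiding h q /\ dominated h p.
Proof.
move=> h0q0; apply: contrapT => none.
have reached0 : avoid_reached (beta h0) by exists h0, q0.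
pose R (l l' : seq (Sigma * gstate B)) :=
  exists2 e, l' = l ++ e & ~~ readable (alpha (map fst l)) (map fst e).
have [f fP] : exists f : nat -> _, forall k, lpath avoid_edge (beta h0) (f k) /\ R (f k) (f k.+1).
  apply: (dependent_choice (x0 := [::])) => // l bl.
  have [h [q [hq hb]]] := lpath_avoid_reached bl reached0.
  have /existsNP [_ /not_implyP [[e le <-] ne]] : ~ dominated h (alpha (map fst l)).
    by move=> dom; apply: none; exists h, q, (alpha (map fst l)).
  exists (l ++ e); last by exists e => //; apply/negP.
  by apply/lpath_cat; rewrite -hb.
have ext k : exists2 e, f k.+1 = f k ++ e & 0 < size e.
  by have [_ [e -> ne]] := fP k; exists e => //; case: e ne.
have [lw lwE] := extension_limit ext; pose w := fst \o lw.
have run n : avoid_edge (lrun (beta h0) lw n) (w n) (lrun (beta h0) lw n.+1).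
  apply: lpath_limit => {}n; exists (size (f n.+1)); first exact: extension_size ext n.+1.
  by rewrite lwE; case: (fP n.+1).
have Lw : L w.
  apply/(L_pi h0)/B_L/(res_state_accepts sigma_res); exists (lrun (beta h0) lw); split.
    by split=> // n; have [] := avoid_edge_step (run n).
  by exists c, 0 => n _; have [] := avoid_edge_step (run n).
have [N safeN] := resolver_eventually_safe A_sdet tau_res (proj2 (A_L w) Lw).
have [_ [e fN ne]] := fP N.
have segE : segment w (size (f N)) (size e) = map fst e.
  rewrite -(size_map fst e); apply: segment_pfx.
  by rewrite size_map !(pfx_map fst lw) -size_cat -fN !lwE fN map_cat.
have := safeN _ (size e) (extension_size ext N).
by rewrite (pfx_map fst lw) lwE segE => E; rewrite /readable E in ne.
Qed.
End Colour.

Section AllColoursHit.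
Hypothesis S_live : forall q, q \in S -> exists a q', safe_trans q a q'.
Hypothesis not_avoiding : forall c h q, ~ avoiding c h q.

Lemma all_colours_hit h q : q \in S -> exists y, [/\ readable q y, 0 < size y & forall c, hits c h y].
Proof.
move=> qS; suff [y [qy y0 hy]] : exists y,
    [/\ readable q y, 0 < size y & forall c, c \in enum (gcolour B) -> hits c h y].
  by exists y; split=> // c; apply/hy; rewrite mem_enum.
elim: (enum _) h q qS => [|c cs IH] h q qS.
  have [a [q' /(safe_stepE A_sdet) qa]] := S_live qS.
  by exists [:: a]; split; rewrite // /readable safe_read_cons qa.
have [y1 qy1 hy1] : exists2 y1, readable q y1 & hits c h y1.
  apply: contrapT => none; apply: (@not_avoiding c h q); split=> // y qy hy.
  by apply: none; exists y.
move: qy1; rewrite /readable; case E: (safe_read q y1) => [q1|] // _.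
have [y2 [q1y2 _ hy2]] := IH (h ++ y1) q1 (safe_read_mem A_nf qS E).
exists (y1 ++ y2); split; first by rewrite safe_read_cat E.
  by rewrite size_cat (leq_trans (hits_size hy1)) ?leq_addr.
move=> c'; rewrite inE => /predU1P [-> | /hy2]; first exact: hits_catr.
exact: hits_catl.
Qed.

Lemma not_avoiding_absurd : False.
Proof.
pose P (x : seq Sigma * Q) := x.2 \in S /\ safe_read s0 x.1 = Some x.2.
pose R (x x' : seq Sigma * Q) :=
  exists y, [/\ x'.1 = x.1 ++ y, 0 < size y & forall c, hits c x.1 y].
have [f fP] : exists f : nat -> _, forall k, P (f k) /\ R (f k) (f k.+1).
  apply: (dependent_choice (x0 := ([::], s0))).
    by split; rewrite //= inE same_safe_comp_refl.
  move=> [h q] [/= qS hq]; have [y [qy y0 hy]] := all_colours_hit h qS.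
  move: qy; rewrite /readable; case E: (safe_read q y) => [q'|] // _.
  exists (h ++ y, q'); last by exists y.
  by split; [apply: (safe_read_mem A_nf qS E) | rewrite /= safe_read_cat hq].
pose hs k := (f k).1.
have ext k : exists2 y, hs k.+1 = hs k ++ y & 0 < size y.
  by have [_ [y [E y0 _]]] := fP k; exists y.
have [w wE] := extension_limit ext.
have Lw : L w.
  apply/(c_lang_fromE L_pi A_nice A_L s0)/safe_lang_accepts/(safe_langP A_sdet) => n.
  have [[_ s0f] _] := fP n; have /subnKC E := extension_size ext n.
  apply: (@readable_catl _ _ _ _ (segment w n (size (hs n) - n))).
  by rewrite -pfxD E wE /readable s0f.
have [c [N cN]] := resolver_accepting sigma_res (proj2 (B_L w) Lw).
have [_ [y [fN _ hy]]] := fP N.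
have segE : segment w (size (hs N)) (size y) = y.
  by apply: segment_pfx; rewrite -size_cat -fN !wE.
have : hits c (hs N) y := hy c; rewrite -{1}(wE N) -segE => /hits_segment [i Ni].
by apply/negP: (cN i (leq_trans (extension_size ext N) Ni)).
Qed.
End AllColoursHit.

Lemma avoiding_exists : (forall q, q \in S -> exists a q', safe_trans q a q') ->
  exists c h q, avoiding c h q.
Proof.
move=> live; apply: contrapT => none; apply: (not_avoiding_absurd live) => c h q hq.
by apply: none; exists c, h, q.
Qed.

Lemma safe_comp_card : 1 < #|S| -> #|S| <= #|gstate B|.
Proof.
move=> S2; have [c [h [q hq]]] := avoiding_exists (fun q => safe_comp_live S2).
have [h' [q' [p [hq' dom]]]] := dominated_exists hq.
have [h'' [p' ex]] := exact_exists hq' dom.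
exact: exact_card ex.
Qed.
End Bound.

Theorem proposition21 (Sigma : finType) (L : language Sigma)
  (B : gcb_aut Sigma) (Amin : cb_aut Sigma) :
  prefix_independent L ->
  g_history_deterministic B -> g_recognises B L ->
  nice Amin -> safe_minimal Amin -> safe_centralised Amin ->
  c_history_deterministic Amin -> c_recognises Amin L ->
  n_max Amin <= #|gstate B|.
Proof.
move=> L_pi [sigma sigma_res] B_L A_nice A_min A_cen [tau tau_res] A_L.
apply/bigmax_leqP => q _; case: (leqP #|safe_comp q| 1) => [S1 | S2].
  by apply: leq_trans S1 _; apply/card_gt0P; exists (ginit B).
exact: (safe_comp_card L_pi B_L A_nice A_min A_cen A_L sigma_res tau_res S2).
Qed.
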